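(* Let $L\ge 3$, and let $G=(V,E)$, $B$ and the plaquettes be those of the planar surface code defined below. Let $D\subseteq V\setminus B$ be arbitrary (of any parity). Then $G$ has a minimum-size $D$-join $J$ relative to $B$ such that every vertex of $D$ has $J$-degree exactly $1$. More specifically, if $J$ is any minimum-size $D$-join of $G$ relative to $B$, then there is a set $P$ of plaquettes such that $J' = J\oplus\bigoplus_{f\in P}\partial f$ satisfies $|J'|=|J|$ and every vertex of $D$ has $J'$-degree exactly $1$.
   Context: Vertex set: $V=\{0,1,\dots,L\}\times\{0,1,\dots,L-1\}$. Edge set: $E$ consists of all horizontal edges $\{(x,y),(x+1,y)\}$ with $0\le x\le L-1$, together with the vertical edges $\{(x,y),(x,y+1)\}$ with $1\le x\le L-1$ and $0\le y\le L-2$. Equivalently, these are the unit grid edges except the vertical edges on the two sides $x=0$ and $x=L$. Boundary vertices: $B=\{(x,y)\in V: x\in\{0,L\}\}$. Plaquettes: for $0\le x\le L-1$ and $0\le y\le L-2$, the plaquette $f_{x,y}$ is the unit square with corners $(x,y),(x+1,y),(x,y+1),(x+1,y+1)$. Its relative boundary $\partial f_{x,y}$ is the set of its four sides that belong to $E$. The symbol $\oplus$ denotes symmetric difference. For $J\subseteq E$, the $J$-degree of a vertex is the number of edges of $J$ incident to it. For disjoint $B,D\subseteq V$, a $D$-join relative to $B$ is a set $J\subseteq E$ such that every vertex of $D$ has odd $J$-degree and every vertex of $V\setminus(D\cup B)$ has even $J$-degree; vertices of $B$ are unconstrained. This is the $[[2L^2-2L+1,1,L]]$ planar surface code: qubits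 are the edges in $E$, $X$-checks are the vertices in $V\setminus B$ (support = incident edges), and $Z$-checks are the plaquettes (support = relative boundary). Its dual lattice is isomorphic to this one. *)

From mathcomp Require Import all_boot.
Set Implicit Arguments. Unset Strict Implicit. Unset Printing Implicit Defensive.

Definition vtx (L : nat) : finType := ('I_L.+1 * 'I_L)%type.

Definition vx L (v : vtx L) : nat := nat_of_ord v.1.
Definition vy L (v : vtx L) : nat := nat_of_ord v.2.

Definition adj L (u w : vtx L) : bool :=
  ((vy u == vy w) && (vx u + 1 == vx w))
  || [&& vx u == vx w, 1 <= vx u, vx u <= L - 1 & vy u + 1 == vy w].

Definition edges L : {set {set vtx L}} :=
  [set e | [exists u, exists w, (e == [set u; w]) && adj u w]].

Definition bnd L : {set vtx L} := [set v | (vx v == 0) || (vx v == L)].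

Definition deg L (J : {set {set vtx L}}) (v : vtx L) : nat :=
  #|[set e in J | v \in e]|.

Definition is_Djoin L (D : {set vtx L}) (J : {set {set vtx L}}) : Prop :=
  [/\ J \subset edges L,
      (forall v, v \in D -> odd (deg J v)) &
      (forall v, v \notin D -> v \notin bnd L -> ~~ odd (deg J v))].

Definition is_min_Djoin L (D : {set vtx L}) (J : {set {set vtx L}}) : Prop :=
  is_Djoin D J /\ (forall J', is_Djoin D J' -> #|J| <= #|J'|).

Definition plaq (L : nat) : finType := ('I_L * 'I_L.-1)%type.

Definition corners L (f : plaq L) : {set vtx L} :=
  [set v : vtx L | [&& f.1 <= vx v <= f.1 + 1 & f.2 <= vy v <= f.2 + 1]].

(* Relative boundary: the sides of the square that belong to E
   (these are exactly the edges of E with both endpoints among the corners). *)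
Definition pbd L (f : plaq L) : {set {set vtx L}} :=
  [set e in edges L | e \subset corners f].

Definition symdiff (T : finType) (A B : {set T}) : {set T} :=
  (A :\: B) :|: (B :\: A).

Definition pbd_sum L (P : {set plaq L}) : {set {set vtx L}} :=
  \big[@symdiff _/set0]_(f in P) pbd f.

From HB Require Import structures.
From mathcomp Require Import all_boot zify.
Set Implicit Arguments. Unset Strict Implicit. Unset Printing Implicit Defensive.

(* Take a minimum D-join K with a vertex v of D of degree at least 3 (degrees on
   D are odd). Symmetric difference with the boundary of a plaquette keeps a
   D-join, and when two sides of the plaquette meeting at v lie in K it trades
   them for at most two edges, so K stays minimum. Weigh a horizontal edge by
   its row in odd columns and by L minus its row in even columns. The left and
   right edges at v pair with opposite vertical edges into two candidate
   corners, and since at most one edge at v is missing, one candidate lies in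
   K; flipping its plaquette moves the horizontal edge to the lighter row, so
   the total weight decreases and iterating ends with all degrees on D equal
   to 1. A first D-join joins each vertex of D to the left boundary along its
   row. *)

Section SymmetricDifference.
Variable T : finType.
Implicit Types A B : {set T}.

Lemma in_symdiff A B x : (x \in symdiff A B) = (x \in A) (+) (x \in B).
Proof. by rewrite !inE; case: (x \in A); case: (x \in B). Qed.

Lemma symdiffA : associative (@symdiff T).
Proof. by move=> A B C; apply/setP => x; rewrite !in_symdiff addbA. Qed.

Lemma symdiffC : commutative (@symdiff T).
Proof. by move=> A B; apply/setP => x; rewrite !in_symdiff addbC. Qed.

Lemma symdiff0s : left_id set0 (@symdiff T).
Proof. by move=> A; apply/setP => x; rewrite in_symdiff inE. Qed.

Lemma symdiffs0 A : symdiff A set0 = A.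
Proof. by rewrite symdiffC symdiff0s. Qed.

Lemma symdiffss A : symdiff A A = set0.
Proof. by apply/setP => x; rewrite in_symdiff addbb inE. Qed.

Lemma big_symdiff (F : T -> nat) A B :
  \sum_(x in symdiff A B) F x + \sum_(x in A :&: B) F x =
  \sum_(x in A) F x + \sum_(x in B :\: A) F x.
Proof.
rewrite (big_setID A) [in RHS](big_setID B) /=.
have -> : symdiff A B :&: A = A :\: B.
  by apply/setP => x; rewrite !(in_symdiff, inE); case: (x \in A); case: (x \in B).
have -> : symdiff A B :\: A = B :\: A.
  by apply/setP => x; rewrite !(in_symdiff, inE); case: (x \in A); case: (x \in B).
by rewrite setIC; lia.
Qed.

Lemma leq_sum_symdiff (F : T -> nat) A B :
  (\sum_(x in symdiff A B) F x <= \sum_(x in A) F x) =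
  (\sum_(x in B :\: A) F x <= \sum_(x in A :&: B) F x).
Proof. have := big_symdiff F A B; lia. Qed.

Lemma ltn_sum_symdiff (F : T -> nat) A B :
  (\sum_(x in symdiff A B) F x < \sum_(x in A) F x) =
  (\sum_(x in B :\: A) F x < \sum_(x in A :&: B) F x).
Proof. have := big_symdiff F A B; lia. Qed.

Lemma odd_card_symdiff A B : odd #|symdiff A B| = odd #|A| (+) odd #|B|.
Proof.
have := cardsID A B; rewrite setIC => <-.
have := congr1 odd (big_symdiff (fun=> 1) A B); rewrite !sum1_card !oddD.
by do 4!case: (odd _).
Qed.

Lemma leq_sum_subset (F : T -> nat) A B :
  A \subset B -> \sum_(x in A) F x <= \sum_(x in B) F x.
Proof.
move=> sAB; rewrite [X in _ <= X](big_setID A) (setIidPr sAB); exact: leq_addr.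
Qed.

Lemma sum_set2_le (F : T -> nat) (a b : T) :
  \sum_(x in [set a; b]) F x <= F a + F b.
Proof.
case: (eqVneq a b) => [<-|ab]; last by rewrite big_setU1 ?inE //= big_set1.
by rewrite setUid big_set1 leq_addr.
Qed.

Lemma card_sub_set2 A (a b : T) :
  A \subset [set a; b] -> a != b -> #|A| = (a \in A) + (b \in A).
Proof.
move=> sA ab; transitivity (\sum_(x in [set a; b]) (x \in A) : nat).
  rewrite (big_setID A) /= [X in _ + X]big1 => [|x]; last by rewrite inE => /andP [/negbTE ->].
  by rewrite addn0 (setIidPr sA) -sum1_card; apply: eq_bigr => x ->.
by rewrite big_setU1 ?inE //= big_set1.
Qed.
End SymmetricDifference.

HB.instance Definition _ (T : finType) :=
  Monoid.isComLaw.Build {set T} set0 (@symdiff T) (@symdiffA T) (@symdiffC T) (@symdiff0s T).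

Lemma pair_of_large_subset (T : finType) (p q : bool -> T) (S : {set T}) :
  (forall e, e \in S -> exists a, e = p a \/ e = q a) -> 2 < #|S| ->
  exists a, (p a \in S) && (q a \in S).
Proof.
move=> sS ltS; case: (boolP [exists a, (p a \in S) && (q a \in S)]) => [/existsP //|].
move/existsPn => noPair; pose r a := if p a \in S then p a else q a.
suff /subset_leq_card : S \subset [set r false; r true].
  by rewrite cards2; case: (_ != _); rewrite leqNgt ?ltS // ltnW.
apply/subsetP => e eS; have [a Ea] := sS e eS.
suff -> : e = r a by case: (a) {Ea}; rewrite ?set21 ?set22.
rewrite /r; case: ifP => pS; case: Ea => E; subst e => //.
  by have := noPair a; rewrite pS eS.
by rewrite pS in eS.
Qed.

Section Degrees.
Variable L : nat.
Implicit Types (D : {set vtx L}) (J K C : {set {set vtx L}}).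

Lemma odd_deg_symdiff J K u :
  odd (deg (symdiff J K) u) = odd (deg J u) (+) odd (deg K u).
Proof.
rewrite /deg; have -> : [set e in symdiff J K | u \in e] =
          symdiff [set e in J | u \in e] [set e in K | u \in e].
  by apply/setP => e; rewrite !(in_symdiff, inE); case: (u \in e); rewrite ?andbF ?andbT.
exact: odd_card_symdiff.
Qed.

Definition is_Djoinb D J :=
  [&& J \subset edges L, [forall v in D, odd (deg J v)] &
      [forall v, (v \notin D) && (v \notin bnd L) ==> ~~ odd (deg J v)]].

Lemma is_DjoinP D J : reflect (is_Djoin D J) (is_Djoinb D J).
Proof.
apply: (iffP and3P) => -[sJ oJ eJ]; split=> //.
- by move=> v; move/forall_inP: oJ; apply.
- by move=> v vD vB; move/forallP/(_ v): eJ; rewrite vD vB.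
- by apply/forall_inP.
- by apply/forallP => v; apply/implyP => /andP [vD vB]; apply: eJ.
Qed.

Lemma exists_min_Djoin D J : is_Djoin D J -> exists K, is_min_Djoin D K.
Proof.
move/is_DjoinP => DJ; case: (arg_minnP (fun K => #|K|) DJ) => K /is_DjoinP DK minK.
by exists K; split=> // J' /is_DjoinP; apply: minK.
Qed.

Lemma Djoin_symdiff D K C : D \subset ~: bnd L ->
  C \subset edges L -> (forall u, u \notin bnd L -> ~~ odd (deg C u)) ->
  is_Djoin D K -> is_Djoin D (symdiff K C).
Proof.
move=> hD sC evenC [sK oK eK]; split.
- apply/subsetP => e; rewrite in_symdiff.
  by case: (e \in K) (subsetP sK e) (subsetP sC e) => /=; auto.
- move=> v vD; have := subsetP hD v vD; rewrite inE => vB.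
  by rewrite odd_deg_symdiff oK // (negbTE (evenC v vB)).
- by move=> v vD vB; rewrite odd_deg_symdiff (negbTE (eK v vD vB)) (negbTE (evenC v vB)).
Qed.
End Degrees.

Section Coordinates.
Variable L : nat.
Local Notation V := (vtx L).
Implicit Types (u v w : V) (e : {set V}) (f : plaq L).

Lemma vx_le u : vx u <= L. Proof. by rewrite -ltnS ltn_ord. Qed.
Lemma vy_lt u : vy u < L. Proof. exact: ltn_ord. Qed.

Lemma vtx_eqE u v : (u == v) = (vx u == vx v) && (vy u == vy v).
Proof. by case: u v => [? ?] [? ?]; rewrite -pair_eqE. Qed.

Lemma notin_bnd v : (v \notin bnd L) = (0 < vx v < L).
Proof. by rewrite inE negb_or; have := vx_le v; lia. Qed.

Lemma plaq_x_lt f : f.1 < L. Proof. exact: ltn_ord. Qed.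
Lemma plaq_y_lt f : f.2.+1 < L. Proof. by have := ltn_ord f.2; lia. Qed.

Lemma in_corners f u :
  (u \in corners f) = (f.1 <= vx u <= f.1.+1) && (f.2 <= vy u <= f.2.+1).
Proof. by rewrite inE !addn1. Qed.

Definition hor u v := (vy u == vy v) && ((vx u).+1 == vx v).

Definition row_weight u := if odd (vx u) then vy u else L - vy u.
Definition edge_weight e := \sum_(u in e) \sum_(w in e) hor u w * row_weight u.
Definition weight (K : {set {set V}}) := \sum_(e in K) edge_weight e.

Lemma hor_irrefl u : hor u u = false.
Proof. by rewrite /hor; lia. Qed.

Lemma edge_weight_set2 u w : u != w ->
  edge_weight [set u; w] = hor u w * row_weight u + hor w u * row_weight w.
Proof.
move=> uw; rewrite /edge_weight big_setU1 ?big_set1 ?inE //= !big_setU1 ?inE //=.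
by rewrite !big_set1 !hor_irrefl !mul0n add0n addn0.
Qed.

End Coordinates.

Section Grid.
Variable L : nat.
Hypothesis L_gt1 : 1 < L.
Local Notation V := (vtx L).
Implicit Types (u v : V) (e : {set V}).

Let L_gt0 : 0 < L. Proof. exact: ltnW. Qed.
Let Lm1_gt0 : 0 < L.-1. Proof. by rewrite -ltnS prednK. Qed.

(* In [mkv] and [mkp], out-of-range coordinates are sent to [0]. *)
Definition mkv (i j : nat) : V := (insubd ord0 i, insubd (Ordinal L_gt0) j).
Definition mkp (i j : nat) : plaq L :=
  (insubd (Ordinal L_gt0) i, insubd (Ordinal Lm1_gt0) j).

Definition hedge (i j : nat) : {set V} := [set mkv i j; mkv i.+1 j].
Definition vedge (i j : nat) : {set V} := [set mkv i j; mkv i j.+1].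

Lemma vx_mkv i j : i <= L -> vx (mkv i j) = i.
Proof. by move=> iL; rewrite /vx val_insubd ltnS iL. Qed.
Lemma vy_mkv i j : j < L -> vy (mkv i j) = j.
Proof. by move=> jL; rewrite /vy val_insubd jL. Qed.

Lemma mkp1 i j : i < L -> (mkp i j).1 = i :> nat.
Proof. by move=> iL; rewrite val_insubd iL. Qed.
Lemma mkp2 i j : j < L.-1 -> (mkp i j).2 = j :> nat.
Proof. by move=> jL; rewrite val_insubd jL. Qed.

Lemma eq_mkv u i j : i <= L -> j < L -> (u == mkv i j) = (vx u == i) && (vy u == j).
Proof. by move=> iL jL; rewrite vtx_eqE vx_mkv // vy_mkv. Qed.

Lemma in_hedge u i j : i < L -> j < L ->
  (u \in hedge i j) = (vy u == j) && ((vx u == i) || (vx u == i.+1)).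
Proof. by move=> iL jL; rewrite !inE !eq_mkv //; lia. Qed.

Lemma in_vedge u i j : i <= L -> j.+1 < L ->
  (u \in vedge i j) = (vx u == i) && ((vy u == j) || (vy u == j.+1)).
Proof. by move=> iL jL; rewrite !inE !eq_mkv //; lia. Qed.

Lemma hedge_inj i j i' j' : i < L -> j < L -> i' < L -> j' < L ->
  hedge i j = hedge i' j' -> i = i' /\ j = j'.
Proof.
move=> iL jL i'L j'L E.
have : mkv i j \in hedge i' j' by rewrite -E setU11.
have : mkv i.+1 j \in hedge i' j' by rewrite -E !inE eqxx orbT.
by rewrite !in_hedge // !vx_mkv // ?vy_mkv //; lia.
Qed.

Lemma hedge_neq_vedge i j i' j' : i < L -> j < L -> i' <= L -> j'.+1 < L ->
  hedge i j != vedge i' j'.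
Proof.
move=> iL jL i'L j'L; apply/eqP => E.
have : mkv i j \in vedge i' j' by rewrite -E setU11.
have : mkv i.+1 j \in vedge i' j' by rewrite -E !inE eqxx orbT.
by rewrite !in_vedge // !vx_mkv //; lia.
Qed.

Lemma mkv_vxvy v : mkv (vx v) (vy v) = v.
Proof. by apply/eqP; rewrite eq_sym eq_mkv ?vx_le ?vy_lt ?eqxx. Qed.

Lemma edgesP e : reflect
  ((exists i j, [/\ i < L, j < L & e = hedge i j]) \/
   (exists i j, [/\ 0 < i < L, j.+1 < L & e = vedge i j]))
  (e \in edges L).
Proof.
rewrite inE; apply: (iffP existsP) => [[u /existsP [w /andP [/eqP -> uw]]]|].
  rewrite /adj -/(vx u) in uw.
  have Eu : mkv (vx u) (vy u) = u := mkv_vxvy u.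
  case/orP: uw => [/andP [/eqP yuw /eqP xuw] | /and4P [/eqP xuw xu0 xuL /eqP yuw]].
    left; exists (vx u), (vy u); split; last by rewrite /hedge Eu yuw -addn1 xuw mkv_vxvy.
    - by have := vx_le w; lia.
    - exact: vy_lt.
  right; exists (vx u), (vy u); split; last by rewrite /vedge Eu -addn1 yuw xuw mkv_vxvy.
  - lia.
  - by have := vy_lt w; lia.
case=> [[i [j [iL jL ->]]] | [i [j [/andP [i0 iL] jL ->]]]];
  [exists (mkv i j); apply/existsP; exists (mkv i.+1 j) |
   exists (mkv i j); apply/existsP; exists (mkv i j.+1)];
  rewrite eqxx /adj !vx_mkv ?vy_mkv //; lia.
Qed.

Lemma hedge_edge i j : i < L -> j < L -> hedge i j \in edges L.
Proof. by move=> iL jL; apply/edgesP; left; exists i, j. Qed.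

Lemma vedge_edge i j : 0 < i < L -> j.+1 < L -> vedge i j \in edges L.
Proof. by move=> iL jL; apply/edgesP; right; exists i, j. Qed.

Section Plaquette.
Variable f : plaq L.
Let x : nat := f.1.
Let y : nat := f.2.

Lemma hedge_sub_corners j : y <= j <= y.+1 -> hedge x j \subset corners f.
Proof.
move=> yj; have xL := plaq_x_lt f; have yL := plaq_y_lt f.
by apply/subsetP => u; rewrite in_hedge ?(in_corners f) //; lia.
Qed.

Lemma vedge_sub_corners i : x <= i <= x.+1 -> vedge i y \subset corners f.
Proof.
move=> xi; have xL := plaq_x_lt f; have yL := plaq_y_lt f.
by apply/subsetP => u; rewrite in_vedge ?(in_corners f) //; lia.
Qed.

Lemma pbd_sides e : e \in pbd f ->
  exists c : bool, e = hedge x (y + c) \/ e = vedge (x + c) y.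
Proof.
have xL := plaq_x_lt f; have yL := plaq_y_lt f.
rewrite inE => /andP [/edgesP [[i [j [iL jL ->]]] | [i [j [/andP [i0 iL] jL ->]]]] sub].
- have := subsetP sub _ (set21 _ _).
  have := subsetP sub _ (set22 _ _).
  rewrite !(in_corners f) !vx_mkv ?vy_mkv ?(ltnW iL) // => h1 h2.
  by exists (j == y.+1); left; congr hedge; lia.
- have := subsetP sub _ (set21 _ _).
  have := subsetP sub _ (set22 _ _).
  rewrite !(in_corners f) !vx_mkv ?vy_mkv ?(ltnW iL) ?(ltnW jL) // => h1 h2.
  by exists (i == x.+1); right; congr vedge; lia.
Qed.

Lemma even_deg_pbd u : u \notin bnd L -> ~~ odd (deg (pbd f) u).
Proof.
rewrite notin_bnd => /andP [u0 uL].
have xL := plaq_x_lt f; have yL := plaq_y_lt f; have uxL := vx_le u; have uyL := vy_lt u.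
have hside : (hedge x (vy u) \in [set e in pbd f | u \in e]) = (u \in corners f).
  rewrite inE; rewrite inE hedge_edge // in_hedge // eqxx /=.
  apply/andP/idP => [[/subsetP sub ?]|uc]; first by apply: sub; rewrite in_hedge // eqxx.
  move: (uc); rewrite (in_corners f) => /andP [ux uy].
  by rewrite hedge_sub_corners //; split=> //; lia.
have vside : (vedge (vx u) y \in [set e in pbd f | u \in e]) = (u \in corners f).
  rewrite inE; rewrite inE vedge_edge ?in_vedge ?eqxx //=; last by apply/andP; split; lia.
  apply/andP/idP => [[/subsetP sub ?]|uc]; first by apply: sub; rewrite in_vedge // eqxx.
  move: (uc); rewrite (in_corners f) => /andP [ux uy].
  by rewrite vedge_sub_corners //; split=> //; lia.
have sub : [set e in pbd f | u \in e] \subset [set hedge x (vy u); vedge (vx u) y].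
  apply/subsetP => e; rewrite inE => /andP [/pbd_sides [c [->|->]]].
    by rewrite in_hedge //; [case/andP => /eqP -> _; rewrite set21 | case: c; lia].
  by rewrite in_vedge //; [case/andP => /eqP -> _; rewrite set22 | case: c; lia].
rewrite /deg (card_sub_set2 sub) ?hedge_neq_vedge // hside vside.
by rewrite addnn odd_double.
Qed.

End Plaquette.

(* [set0], which does not contain [v], stands for a vertical edge that would
   leave the grid. *)
Definition vedge_at v (b : bool) : {set V} :=
  if (b <= vy v) && ((vy v - b).+1 < L) then vedge (vx v) (vy v - b) else set0.

Lemma vedge_atP v b : v \in vedge_at v b ->
  [/\ b <= vy v, (vy v - b).+1 < L & vedge_at v b = vedge (vx v) (vy v - b)].
Proof. by rewrite /vedge_at; case: ifP => [/andP [-> ->] //|]; rewrite inE. Qed.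

Lemma edges_at v e : 0 < vx v < L -> e \in edges L -> v \in e ->
  exists c : bool, e = hedge (vx v - c) (vy v) \/ e = vedge_at v c.
Proof.
move=> /andP [vx0 vxL] /edgesP [[i [j [iL jL ->]]] | [i [j [/andP [i0 iL] jL ->]]]].
  rewrite in_hedge // => /andP [/eqP -> /orP [] /eqP ->].
    by exists false; left; rewrite subn0.
  by exists true; left; rewrite subn1.
rewrite in_vedge ?(ltnW iL) // => /andP [/eqP vxv /orP [] /eqP vyv].
  by exists false; right; rewrite /vedge_at vxv vyv subn0 jL.
by exists true; right; rewrite /vedge_at vxv vyv subn1 /= jL.
Qed.

Lemma edge_weight_hedge i j : i < L -> j < L ->
  edge_weight (hedge i j) = if odd i then j else L - j.
Proof.
move=> iL jL; have iL' := ltnW iL.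
rewrite edge_weight_set2; last by rewrite eq_mkv ?vx_mkv ?vy_mkv //; lia.
rewrite /hor /row_weight !vx_mkv ?vy_mkv // !eqxx /=.
by rewrite (_ : i.+2 == i = false) ?mul0n ?addn0 ?mul1n //; lia.
Qed.

Lemma edge_weight_vedge i j : i <= L -> j.+1 < L -> edge_weight (vedge i j) = 0.
Proof.
move=> iL jL; have jL' := ltnW jL.
rewrite edge_weight_set2; last by rewrite eq_mkv ?vx_mkv ?vy_mkv //; lia.
by rewrite /hor !vx_mkv // (_ : i.+1 == i = false) ?andbF //; lia.
Qed.

End Grid.

Lemma pbd_sum_toggle L (f : plaq L) (P : {set plaq L}) :
  exists P', pbd_sum P' = symdiff (pbd f) (pbd_sum P).
Proof.
case: (boolP (f \in P)) => fP; last by exists (f |: P); rewrite /pbd_sum big_setU1.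
by exists (P :\ f); rewrite /pbd_sum (big_setD1 f fP) /= symdiffA symdiffss symdiff0s.
Qed.

Section Flip.
Variable L : nat.
Hypothesis L_gt1 : 1 < L.
Variable D : {set vtx L}.
Hypothesis hD : D \subset ~: bnd L.
Local Notation V := (vtx L).

Lemma interior_of_D v : v \in D -> 0 < vx v < L.
Proof. by move/(subsetP hD); rewrite in_setC notin_bnd. Qed.

Lemma pbd_edges (f : plaq L) : pbd f \subset edges L.
Proof. by apply/subsetP => e; rewrite inE => /andP []. Qed.

Lemma Djoin_flip K f : is_Djoin D K -> is_Djoin D (symdiff K (pbd f)).
Proof. exact: Djoin_symdiff hD (pbd_edges f) (even_deg_pbd L_gt1 f). Qed.

(* The two given sides of [f] meet at its corner [(f.1 + a, f.2 + odd f.1)], and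
   the horizontal side opposite to them is the lighter one. *)
Lemma flip_corner K (f : plaq L) (a : bool) : is_min_Djoin D K ->
  hedge L_gt1 f.1 (f.2 + odd f.1) \in K -> vedge L_gt1 (f.1 + a) f.2 \in K ->
  is_min_Djoin D (symdiff K (pbd f)) /\ weight (symdiff K (pbd f)) < weight K.
Proof.
move=> [DK minK] hK vK; have [sK _ _] := DK.
have xL := plaq_x_lt f; have yL := plaq_y_lt f.
set X := pbd f; set b := odd f.1 in hK *.
set hin := hedge _ _ _ in hK; set vin := vedge _ _ _ in vK.
set hout := hedge L_gt1 f.1 (f.2 + ~~ b); set vout := vedge L_gt1 (f.1 + ~~ a) f.2.
have neq_negb (c d : bool) : c != d -> c = ~~ d by case: c d => [] [].
have in_X e : e \in K -> e \subset corners f -> e \in K :&: X.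
  by move=> eK ec; rewrite in_setI eK inE (subsetP sK e eK).
have inKX : [set hin; vin] \subset K :&: X.
  apply/subsetP => e /set2P [] ->; apply: in_X => //.
    by apply: hedge_sub_corners; lia.
  by apply: vedge_sub_corners; lia.
have outXK : X :\: K \subset [set hout; vout].
  apply/subsetP => e /setDP [/pbd_sides [c [] ->] eK].
    by case: (eqVneq c b) eK => [cb | /neq_negb ->]; [rewrite cb hK | rewrite set21].
  by case: (eqVneq c a) eK => [ca | /neq_negb ->]; [rewrite ca vK | rewrite set22].
have hvin : hin != vin by apply: hedge_neq_vedge; lia.
have card_le : #|symdiff K X| <= #|K|.
  rewrite -!sum1_card leq_sum_symdiff !sum1_card.
  apply: leq_trans (subset_leq_card outXK) (leq_trans _ (subset_leq_card inKX)).
  by rewrite !cards2 hvin; case: (_ != _).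
split.
  split; first exact: Djoin_flip.
  by move=> J' DJ'; apply: leq_trans card_le (minK J' DJ').
rewrite /weight ltn_sum_symdiff.
apply: leq_ltn_trans (leq_sum_subset _ outXK) (leq_trans _ (leq_sum_subset _ inKX)).
apply: leq_ltn_trans (sum_set2_le _ _ _) _.
rewrite big_setU1 ?inE //= big_set1 /hin /hout /vin /vout.
rewrite !edge_weight_hedge ?edge_weight_vedge //; try lia.
by rewrite /b; case: (odd f.1); lia.
Qed.

Lemma corner_pair K v : is_Djoin D K -> v \in D -> deg K v != 1 ->
  exists a : bool, let b := odd (vx v - a) in
    [/\ hedge L_gt1 (vx v - a) (vy v) \in K, vedge_at L_gt1 v b \in K
       & v \in vedge_at L_gt1 v b].
Proof.
move=> [sK oK _] vD dv; have vint := interior_of_D vD.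
have deg_gt2 : 2 < deg K v by move: (oK v vD) dv; case: (deg K v) => [|[|[]]].
have oddB_vx (a : bool) : odd (vx v - a) = odd (vx v) (+) a.
  by rewrite oddB //; case: a; case/andP: vint.
pose p (a : bool) := hedge L_gt1 (vx v - a) (vy v).
pose q (a : bool) := vedge_at L_gt1 v (odd (vx v - a)).
have [|a /andP [pK qK]] := @pair_of_large_subset _ p q [set e in K | v \in e] _ deg_gt2.
  move=> e; rewrite inE => /andP [eK ve].
  have [c [->|->]] := edges_at L_gt1 vint (subsetP sK e eK) ve; first by exists c; left.
  by exists (odd (vx v) (+) c); right; rewrite /q oddB_vx addKb.
by exists a; move: pK qK; rewrite !inE => /andP [? _] /andP [? ?].
Qed.

Lemma reduce_excess_degree K v : is_min_Djoin D K -> v \in D -> deg K v != 1 ->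
  exists f : plaq L,
    is_min_Djoin D (symdiff K (pbd f)) /\ weight (symdiff K (pbd f)) < weight K.
Proof.
move=> minK vD dv; have /andP [vx0 vxL] := interior_of_D vD.
have [a /= [hK vK /vedge_atP [bvy bL vE]]] := corner_pair minK.1 vD dv.
set b := odd (vx v - a) in hK vK bvy bL vE.
exists (mkp L_gt1 (vx v - a) (vy v - b)).
have f1 : (mkp L_gt1 (vx v - a) (vy v - b)).1 = vx v - a :> nat by rewrite mkp1 //; lia.
have f2 : (mkp L_gt1 (vx v - a) (vy v - b)).2 = vy v - b :> nat by rewrite mkp2 //; lia.
apply: (@flip_corner K _ a minK); rewrite f1 f2.
  by rewrite -/b subnK.
by rewrite subnK -?vE //; case: (a) vx0.
Qed.

Lemma min_Djoin_unit_degree K : is_min_Djoin D K ->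
  exists P : {set plaq L}, is_min_Djoin D (symdiff K (pbd_sum P)) /\
    (forall v, v \in D -> deg (symdiff K (pbd_sum P)) v = 1).
Proof.
have [n] := ubnP (weight K); elim: n K => // n IH K ltKn minK.
case: (boolP [forall v in D, deg K v == 1]) => [/forall_inP unitK | /forall_inPn [v vD dv]].
  by exists set0; rewrite /pbd_sum big_set0 symdiffs0; split=> // v /unitK /eqP.
have [f [minKf ltKf]] := reduce_excess_degree minK vD dv.
have [P [minP unitP]] := IH _ (leq_trans ltKf ltKn) minKf.
have [P' EP'] := pbd_sum_toggle f P.
by exists P'; rewrite EP' symdiffA.
Qed.

End Flip.

Section RowJoin.
Variable L : nat.
Hypothesis L_gt1 : 1 < L.
Variable D : {set vtx L}.
Local Notation V := (vtx L).

Definition row_count (j i : nat) := #|[set d in D | (vy d == j) && (i <= vx d)]|.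

(* Join each vertex of [D] to the left boundary along its row; an edge of row
   [j] starting at column [i] is then used by [row_count j i.+1] paths. *)
Definition row_join : {set {set V}} :=
  [set e | [exists i : 'I_L, exists j : 'I_L,
     (e == hedge L_gt1 i j) && odd (row_count j i.+1)]].

Lemma mem_row_join i j : i < L -> j < L ->
  (hedge L_gt1 i j \in row_join) = odd (row_count j i.+1).
Proof.
move=> iL jL; rewrite inE; apply/existsP/idP => [[i' /existsP [j' /andP [/eqP E]]]|oj].
  by have [<- <-] := hedge_inj (ltn_ord i') (ltn_ord j') iL jL (esym E).
by exists (Ordinal iL); apply/existsP; exists (Ordinal jL); rewrite eqxx.
Qed.

Lemma row_count_step u :
  row_count (vy u) (vx u) = (u \in D) + row_count (vy u) (vx u).+1.
Proof.
rewrite /row_count (cardsD1 u) inE eqxx leqnn !andbT; congr (_ + _).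
apply: eq_card => d; rewrite !inE vtx_eqE.
case: (d \in D); rewrite /= ?andbF //.
by case: (vy d == vy u); rewrite /= ?andbF ?andbT //; lia.
Qed.

Lemma odd_deg_row_join u : 0 < vx u < L -> odd (deg row_join u) = (u \in D).
Proof.
move=> /andP [ux0 uxL]; have uyL := vy_lt u; have uxL' : (vx u).-1 < L by lia.
set hR := hedge L_gt1 (vx u) (vy u); set hL := hedge L_gt1 (vx u).-1 (vy u).
have sub : [set e in row_join | u \in e] \subset [set hR; hL].
  apply/subsetP => e; rewrite !inE => /andP [/existsP [i /existsP [j /andP [/eqP -> _]]]].
  rewrite in_hedge // => /andP [/eqP <- /orP [] /eqP E]; first by rewrite /hR E eqxx.
  by rewrite /hL E /= eqxx orbT.
have hRL : hR != hL by apply/eqP => /hedge_inj; case => //; lia.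
rewrite /deg (card_sub_set2 sub hRL) [hR \in _]inE [hL \in _]inE !mem_row_join //.
rewrite !in_hedge // prednK // !eqxx ?orbT /= ?andbT row_count_step !oddD !oddb.
by rewrite addbCA addbb addbF.
Qed.

Hypothesis hD : D \subset ~: bnd L.

Lemma row_join_Djoin : is_Djoin D row_join.
Proof.
split.
- by apply/subsetP => e; rewrite inE => /existsP [i /existsP [j /andP [/eqP -> _]]];
    apply: hedge_edge.
- move=> v vD; have := subsetP hD v vD.
  by rewrite in_setC notin_bnd => /odd_deg_row_join ->.
- by move=> v vD; rewrite notin_bnd => /odd_deg_row_join ->.
Qed.
End RowJoin.

Unset Implicit Arguments.

Theorem theorem3p2 (L : nat) (hL : 3 <= L) (D : {set vtx L})
  (hD : D \subset ~: bnd L) :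
  (exists J : {set {set vtx L}},
      is_min_Djoin D J /\ (forall v, v \in D -> deg J v = 1)) /\
  (forall J : {set {set vtx L}}, is_min_Djoin D J ->
     exists P : {set plaq L},
       #|symdiff J (pbd_sum P)| = #|J| /\
       (forall v, v \in D -> deg (symdiff J (pbd_sum P)) v = 1)).
Proof.
have L_gt1 : 1 < L := ltnW hL.
split.
  have [K minK] := exists_min_Djoin (row_join_Djoin L_gt1 hD).
  have [P [minKP unitKP]] := min_Djoin_unit_degree L_gt1 hD minK.
  by exists (symdiff K (pbd_sum P)).
move=> J minJ; have [P [minJP unitJP]] := min_Djoin_unit_degree L_gt1 hD minJ.
exists P; split=> //; apply/eqP.
by rewrite eqn_leq (minJP.2 J minJ.1) (minJ.2 _ minJP.1).
Qed.
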